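(* Let $p$ be an odd prime, let $\nu_k=2\cos\left(\frac{(2k-1)\pi}{2p}\right)$ for $1\le k\le p$, and let $\theta_1,\dots,\theta_{p-1}$ be the nodes $\nu_k$ with $k\ne\frac{p+1}{2}$, listed in the order: $\nu_{(p+1)/2}$ is replaced by $\nu_1$ in the list $\nu_1,\dots,\nu_p$ and the first entry is removed. Let $R_i^*(x)\in\mathbb{Z}[x]$, $1\le i\le p-1$, be monic of degree $i$ with zero constant term, given by $R_i^*(x)=2T_i(x/2)+2r_i$ where $r_i=0$ for $i$ odd, $r_i=1$ for $i\equiv2\pmod4$, $r_i=-1$ for $i\equiv0\pmod4$, and let $N_{4p}=(R_i^*(\theta_j))_{1\le j\le p-1,\,1\le i\le p-1}$. Then $$N_{4p}=P\,U_{4p},\qquad P=\mathrm{diag}(\theta_1,\dots,\theta_{p-1}),\qquad U_{4p}=\big(r_i^*(\theta_j)\big)_{1\le j\le p-1,\ 0\le i\le p-2},$$ where for each $i\in\{0,\dots,p-2\}$ the polynomial $r_i^*(x)\in\mathbb{Z}[x]$ is monic of degree $i$. Moreover $\mathrm{Cond}(U_{4p})\le p^3(p+1)(2p-1)^2$.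
   Context: $T_i$ is the Tchebycheff polynomial of the first kind ($T_0=1$, $T_1=x$, $T_i=2xT_{i-1}-T_{i-2}$). For an invertible complex matrix $A$, $\|A\|=\sqrt{\mathrm{Tr}(AA^* )}$ is the Frobenius norm and $\mathrm{Cond}(A)=\|A\|\,\|A^{-1}\|$. The matrix $N_{4p}$ is the lower-right $(p-1)\times(p-1)$ block of $FQ_{4p}C$, where $Q_{4p}$ is $(2T_i(\nu_k/2))_{k,i}$ with rows $1$ and $\frac{p+1}{2}$ interchanged, $F$ subtracts the first row from all other rows, and $C$ adds $r_i$ times column $0$ to column $i$. *)

From HB Require Import structures.
From mathcomp Require Import all_boot all_order all_algebra.
From mathcomp Require Import reals trigo.
Set Implicit Arguments. Unset Strict Implicit. Unset Printing Implicit Defensive.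
Import Order.TTheory GRing.Theory Num.Theory.
Local Open Scope ring_scope.

Fixpoint cheb_aux (n : nat) : {poly int} * {poly int} :=
  match n with
  | 0%N => (1, 'X)
  | n'.+1 => let: (a, b) := cheb_aux n' in (b, 2%:P * 'X * b - a)
  end.
Definition cheb (n : nat) : {poly int} := (cheb_aux n).1.

Definition evalZ {R : realType} (q : {poly int}) (x : R) : R :=
  (map_poly intr q).[x].

Definition nu {R : realType} (p k : nat) : R :=
  2 * cos (((2 * k - 1)%N)%:R * pi / (2 * p)%:R).

(* theta_j, 1 <= j <= p-1: nu_1,...,nu_p with nu_{(p+1)/2} replaced by nu_1,
   first entry removed. *)
Definition theta {R : realType} (p j : nat) : R :=
  if (j == (p - 1) %/ 2)%N then nu p 1 else nu p j.+1.

Definition rcoef {R : realType} (i : nat) : R :=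
  if odd i then 0 else if (i %% 4 == 2)%N then 1 else -1.

Definition Rstar {R : realType} (i : nat) (x : R) : R :=
  2 * evalZ (cheb i) (x / 2) + 2 * rcoef i.

(* N_{4p} = (R_i^*(theta_j))_{1<=j<=p-1, 1<=i<=p-1} ; 0-based indices *)
Definition N4p {R : realType} (p : nat) : 'M[R]_(p.-1) :=
  \matrix_(j < p.-1, i < p.-1) Rstar i.+1 (theta p j.+1).

Definition Pdiag {R : realType} (p : nat) : 'M[R]_(p.-1) :=
  diag_mx (\row_(j < p.-1) theta p j.+1).

Definition U4p {R : realType} (p : nat) (r : nat -> {poly int}) : 'M[R]_(p.-1) :=
  \matrix_(j < p.-1, i < p.-1) evalZ (r i) (theta p j.+1).

(* Frobenius norm sqrt(Tr(A A^H)), A^H = conjugate transpose = A^T for real A *)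
Definition frob {R : realType} {n : nat} (A : 'M[R]_n) : R :=
  Num.sqrt (\tr (A *m A^T)).

Definition Cond {R : realType} {n : nat} (A : 'M[R]_n) : R :=
  frob A * frob (invmx A).

From HB Require Import structures.
From mathcomp Require Import all_boot all_order all_algebra.
From mathcomp Require Import reals trigo.
From mathcomp Require Import ring lra zify.
Import Order.TTheory GRing.Theory Num.Theory.
Local Open Scope ring_scope.

(* With D_n(x) = 2 T_n(x/2) (so D_n(2 cos y) = 2 cos(n y)), we have
   R_i^*(x) = D_i(x) + 2 r_i = x q_i(x) for monic integer polynomials q_i of
   degree i - 1, which gives N = P U with r_i^* = q_{i+1}.  The nodes nu_k are
   the Chebyshev nodes cos((2k-1) pi / 2p) scaled by 2, for which the discrete
   cosine sums give sum_k D_a(nu_k) R_b^*(nu_k) = 2p [a = b] (0 < a, b < p);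
   the removed node nu_{(p+1)/2} = 0 contributes nothing, so U^-1 has the
   explicit entries D_i(theta_j) theta_j / 2p.  Since |D_n| <= 2 and
   |q_m| <= m on [-2, 2], every entry of U is at most p and every entry of
   U^-1 at most 4, which bounds both Frobenius norms. *)

Lemma nat_ind2 (P : nat -> Prop) :
  P 0%N -> P 1%N -> (forall n, P n -> P n.+1 -> P n.+2) -> forall n, P n.
Proof.
move=> P0 P1 PSS n; suff [] : P n /\ P n.+1 by [].
by elim: n => [|n [Pn PSn]]; split; last exact: PSS.
Qed.

Fixpoint dickson_aux (n : nat) : {poly int} * {poly int} :=
  match n with
  | 0%N => (2%:P, 'X)
  | n'.+1 => let: (a, b) := dickson_aux n' in (b, 'X * b - a)
  end.
Definition dickson (n : nat) : {poly int} := (dickson_aux n).1.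

Lemma dickson0 : dickson 0 = 2%:P. Proof. by []. Qed.
Lemma dickson1 : dickson 1 = 'X. Proof. by []. Qed.
Lemma dicksonSS n : dickson n.+2 = 'X * dickson n.+1 - dickson n.
Proof. by rewrite /dickson /=; case: (dickson_aux n). Qed.

Lemma cheb0 : cheb 0 = 1. Proof. by []. Qed.
Lemma cheb1 : cheb 1 = 'X. Proof. by []. Qed.
Lemma chebSS n : cheb n.+2 = 2%:P * 'X * cheb n.+1 - cheb n.
Proof. by rewrite /cheb /=; case: (cheb_aux n). Qed.

Lemma size_dickson_monic n :
  size (dickson n) = n.+1 /\ ((0 < n)%N -> dickson n \is monic).
Proof.
elim/nat_ind2: n => [|| n [sz0 _] [sz1 /(_ isT) mon1]].
- by rewrite dickson0 size_polyC.
- by rewrite dickson1 size_polyX monicX.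
have szX1 : size ('X * dickson n.+1) = n.+3.
  by rewrite size_monicM ?monicX ?monic_neq0 // size_polyX sz1.
have ltsz : (size (- dickson n) < size ('X * dickson n.+1)%R)%N by rewrite size_polyN sz0 szX1.
rewrite dicksonSS size_polyDl // szX1; split=> // _.
by rewrite monicE lead_coefDl // lead_coef_monicM ?monicX.
Qed.

(* The quotient (D_m + 2 r_m) / X, see [evalZ_Rstar_quot]. *)
Fixpoint Rstar_quot (m : nat) : {poly int} :=
  match m with
  | 0%N => 0
  | 1%N => 1
  | m'.+2 => dickson m'.+1 - Rstar_quot m'
  end.

Definition rstar (i : nat) : {poly int} := Rstar_quot i.+1.

Lemma size_Rstar_quot_monic m :
  size (Rstar_quot m) = m /\ ((0 < m)%N -> Rstar_quot m \is monic).
Proof.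
elim/nat_ind2: m => [|| m [sz0 _] _ /=]; first by rewrite size_poly0.
  by rewrite size_poly1 monic1.
have [szD monD] := size_dickson_monic m.+1.
have ltsz : (size (- Rstar_quot m) < size (dickson m.+1))%N by rewrite size_polyN sz0 szD.
rewrite size_polyDl // szD; split=> // _.
by rewrite monicE lead_coefDl // -monicE monD.
Qed.

Lemma rstar_monic_size i : rstar i \is monic /\ size (rstar i) = i.+1.
Proof. by have [sz /(_ isT) mon] := size_Rstar_quot_monic i.+1. Qed.

Section Evaluation.
Variable R : realType.
Implicit Types (x y : R) (q : {poly int}).

Lemma evalZB q1 q2 x : evalZ (q1 - q2) x = evalZ q1 x - evalZ q2 x.
Proof. by rewrite /evalZ rmorphB /= hornerD hornerN. Qed.

Lemma evalZ_mulC (c : int) q x : evalZ (c%:P * q) x = c%:~R * evalZ q x.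
Proof. by rewrite /evalZ rmorphM /= map_polyC hornerCM. Qed.

Lemma evalZ_mulX q x : evalZ ('X * q) x = x * evalZ q x.
Proof. by rewrite /evalZ rmorphM /= map_polyX hornerM hornerX. Qed.

Lemma evalZC (c : int) x : evalZ c%:P x = c%:~R.
Proof. by rewrite /evalZ map_polyC hornerC. Qed.

Lemma evalZX x : evalZ 'X x = x.
Proof. by rewrite /evalZ map_polyX hornerX. Qed.

Lemma evalZ0 x : evalZ 0 x = 0.
Proof. by rewrite /evalZ rmorph0 horner0. Qed.

Lemma evalZ1 x : evalZ 1 x = 1.
Proof. by rewrite /evalZ rmorph1 hornerC. Qed.

Lemma evalZ_dicksonSS n x :
  evalZ (dickson n.+2) x = x * evalZ (dickson n.+1) x - evalZ (dickson n) x.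
Proof. by rewrite dicksonSS evalZB evalZ_mulX. Qed.

Lemma evalZ_cheb_half n x : 2 * evalZ (cheb n) (x / 2) = evalZ (dickson n) x.
Proof.
elim/nat_ind2: n => [||n IH0 IH1].
- by rewrite cheb0 dickson0 evalZ1 evalZC mulr1.
- by rewrite cheb1 dickson1 !evalZX; field.
rewrite chebSS evalZ_dicksonSS evalZB -mulrA evalZ_mulC evalZ_mulX -IH0 -IH1.
by field.
Qed.

Lemma Rstar_dickson i x : Rstar i x = evalZ (dickson i) x + 2 * rcoef i.
Proof. by rewrite /Rstar evalZ_cheb_half. Qed.

Lemma rcoefSS i : rcoef (R:=R) i.+2 = - rcoef i.
Proof.
rewrite /rcoef /= negbK; case: ifP => [_|/negbT ev]; first by rewrite oppr0.
have even_i : (i %% 2 = 0)%N by rewrite modn2 (negbTE ev).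
have [i0|i2] : (i %% 4 = 0 \/ i %% 4 = 2)%N by lia.
  have -> : (i.+2 %% 4 == 2)%N by lia.
  by rewrite i0 /= opprK.
have -> : (i.+2 %% 4 == 2)%N = false by lia.
by rewrite i2.
Qed.

Lemma evalZ_Rstar_quot m x :
  evalZ (dickson m) x + 2 * rcoef m = x * evalZ (Rstar_quot m) x.
Proof.
elim/nat_ind2: m => [||m IH0 _].
- by rewrite dickson0 evalZC evalZ0 /rcoef /=; ring.
- by rewrite dickson1 evalZ1 evalZX /rcoef /=; ring.
by rewrite evalZ_dicksonSS rcoefSS /= evalZB mulrBr -IH0; ring.
Qed.

Lemma Rstar_factor i x : Rstar i.+1 x = x * evalZ (rstar i) x.
Proof. by rewrite Rstar_dickson evalZ_Rstar_quot. Qed.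

End Evaluation.

Section OnTheCircle.
Variable R : realType.
Implicit Types (y : R).

Lemma evalZ_dickson_cos n y : evalZ (dickson n) (2 * cos y) = 2 * cos (n%:R * y).
Proof.
elim/nat_ind2: n => [||n IH0 IH1].
- by rewrite dickson0 evalZC mul0r cos0 mulr1.
- by rewrite dickson1 evalZX mul1r.
have -> : n.+2%:R * y = n.+1%:R * y + y by rewrite !mulrS; ring.
have cosn : cos (n%:R * y) = cos (n.+1%:R * y - y) by rewrite mulrS; congr cos; ring.
by rewrite evalZ_dicksonSS IH0 IH1 cosn cosB cosD; ring.
Qed.

Lemma norm_cos2_le2 y : `|2 * cos y| <= 2.
Proof. by rewrite normrM ger0_norm // -[leRHS]mulr1 ler_pM2l // cos_max. Qed.

Lemma norm_dickson_cos_le n y : `|evalZ (dickson n) (2 * cos y)| <= 2.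
Proof. by rewrite evalZ_dickson_cos norm_cos2_le2. Qed.

Lemma norm_Rstar_quot_cos_le m y : `|evalZ (Rstar_quot m) (2 * cos y)| <= m%:R.
Proof.
elim/nat_ind2: m => [||m IH0 _ /=].
- by rewrite evalZ0 normr0.
- by rewrite evalZ1 normr1.
rewrite evalZB (le_trans (ler_normB _ _)) //.
have := norm_dickson_cos_le m.+1 y; rewrite !mulrS in IH0 *; lra.
Qed.

Lemma sin_natmulpi m : sin (m%:R * pi) = 0 :> R.
Proof.
elim: m => [|m IH]; first by rewrite mul0r sin0.
by rewrite mulrS mulrDl mul1r sinD IH sinpi mul0r mulr0 addr0.
Qed.

Definition node_angle (p k : nat) : R := (2 * k + 1)%N%:R * pi / (2 * p)%N%:R.

Lemma nuE p k : nu (R:=R) p k.+1 = 2 * cos (node_angle p k).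
Proof. by rewrite /nu /node_angle (_ : (2 * k.+1 - 1 = 2 * k + 1)%N) //; lia. Qed.

(* Multiplying by 2 sin(m pi / 2p) turns the sum into a telescoping sum of sines. *)
Lemma sum_cos_node_angle p m : (0 < m < 2 * p)%N ->
  \sum_(k < p) cos (m%:R * node_angle p k) = 0.
Proof.
move=> /andP [m0 mp].
have p0 : 0 < (2 * p)%N%:R :> R by rewrite ltr0n; lia.
set x : R := m%:R * pi / (2 * p)%N%:R.
have sinx : 0 < sin x.
  apply: sin_gt0_pi; rewrite divr_gt0 // ?mulr_gt0 ?pi_gt0 ?ltr0n //=.
  by rewrite ltr_pdivrMr // mulrC ltr_pM2l ?pi_gt0 // ltr_nat.
have telescope : \sum_(k < p) 2 * sin x * cos (m%:R * node_angle p k) = sin (m%:R * pi).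
  rewrite -(big_mkord xpredT (fun k => 2 * sin x * cos (m%:R * node_angle p k))).
  rewrite (telescope_sumr_eq (fun k => sin ((2 * k)%N%:R * x))) //.
    rewrite muln0 mul0r sin0 subr0 /x natrM; congr sin; field.
    by rewrite pnatr_eq0; lia.
  move=> k _; set u := (2 * k + 1)%N%:R * x.
  have -> : m%:R * node_angle p k = u by rewrite /u /x /node_angle; ring.
  have -> : (2 * k.+1)%N%:R * x = u + x.
    by rewrite /u (_ : (2 * k.+1 = 2 * k + 1 + 1)%N) ?natrD; [ring | lia].
  have -> : (2 * k)%N%:R * x = u - x by rewrite /u natrD; ring.
  by rewrite sinD sinB; ring.
move: telescope; rewrite sin_natmulpi -mulr_sumr => /eqP.
by rewrite mulf_eq0 mulf_eq0 (gt_eqF sinx) pnatr_eq0 /= => /eqP.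
Qed.

Lemma dickson_orthogonality p a b : (0 < a < p)%N -> (0 < b < p)%N ->
  \sum_(k < p) evalZ (dickson a) (nu (R:=R) p k.+1) *
      (evalZ (dickson b) (nu p k.+1) + 2 * rcoef b) = (2 * p)%N%:R * (a == b)%:R.
Proof.
move=> /andP [a0 ap] /andP [b0 bp].
pose S m := \sum_(k < p) cos (m%:R * node_angle p k).
pose d := if (b <= a)%N then (a - b)%N else (b - a)%N.
have product_to_sum y : 2 * cos (a%:R * y) * (2 * cos (b%:R * y) + 2 * rcoef b) =
     2 * cos ((a + b)%N%:R * y) + 2 * cos (d%:R * y) + 4 * rcoef b * cos (a%:R * y).
  have cosd : cos (d%:R * y) = cos (a%:R * y - b%:R * y).
    rewrite /d; case: leqP => h; first by rewrite natrB // mulrBl.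
    by rewrite natrB ?(ltnW h) // mulrBl -cosN opprB.
  have -> : (a + b)%N%:R * y = a%:R * y + b%:R * y by rewrite natrD mulrDl.
  by rewrite cosd cosB cosD; ring.
have -> : \sum_(k < p) evalZ (dickson a) (nu p k.+1) *
      (evalZ (dickson b) (nu p k.+1) + 2 * rcoef b) =
   2 * S (a + b)%N + 2 * S d + 4 * rcoef b * S a.
  rewrite /S !mulr_sumr -!big_split /=; apply: eq_bigr => k _.
  by rewrite nuE !evalZ_dickson_cos product_to_sum.
have S0 m : (0 < m < 2 * p)%N -> S m = 0 by apply: sum_cos_node_angle.
rewrite (S0 (a + b)%N) 1?(S0 a) ?mulr0 ?addr0 ?add0r; try by apply/andP; lia.
case: (eqVneq a b) => [eq_ab|neq_ab]; last first.
  rewrite S0 ?mulr0 //; move/eqP: neq_ab.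
  by rewrite /d; case: (leqP b a) => h neq_ab; apply/andP; lia.
rewrite /S /d eq_ab leqnn subnn; under eq_bigr do rewrite mul0r cos0.
by rewrite sumr_const card_ord natrM mulr_natl mulr1.
Qed.

Lemma nu_middle p : odd p -> nu (R:=R) p ((p - 1) %/ 2).+1 = 0.
Proof.
move=> op; have p0 : (0 < p)%N by case: p op.
have p_mod2 : (p %% 2 = 1)%N by rewrite modn2 op.
have pE : p = (2 * ((p - 1) %/ 2) + 1)%N by lia.
rewrite nuE /node_angle -pE.
have -> : p%:R * pi / (2 * p)%N%:R = pi / 2 :> R.
  by rewrite natrM; field; rewrite pnatr_eq0 -lt0n.
by rewrite cos_pihalf mulr0.
Qed.

Lemma theta_cos p j : exists y : R, theta p j = 2 * cos y.
Proof. by rewrite /theta /nu; case: ifP; eexists. Qed.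

End OnTheCircle.

Section TheMatrixU.
Variable R : realType.

Lemma sum_theta p (g : R -> R) : (3 <= p)%N ->
  \sum_(j < p.-1) g (theta p j.+1) =
  \sum_(k < p) g (nu p k.+1) - g (nu p ((p - 1) %/ 2).+1).
Proof.
case: p => // n n2 /=; rewrite subn1 /=.
have hn : ((n %/ 2).-1 < n)%N by lia.
pose j0 : 'I_n := Ordinal hn.
rewrite (bigD1 j0) //= [in RHS]big_ord_recl [in RHS](bigD1 j0) //=.
have -> : theta (R:=R) n.+1 (n %/ 2).-1.+1 = nu n.+1 1.
  by rewrite /theta subn1 prednK ?eqxx //; lia.
have -> : bump 0 (n %/ 2).-1 = (n %/ 2)%N by rewrite /bump; lia.
rewrite (eq_bigr (fun i : 'I_n => g (nu n.+1 (lift ord0 i).+1))); first ring.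
move=> i ij; rewrite /theta subn1 /=.
by case: eqP => // ie; case/eqP: ij; apply: val_inj => /=; lia.
Qed.

Lemma N4p_factor p : N4p p = Pdiag p *m U4p (R:=R) p rstar.
Proof. by apply/matrixP => j i; rewrite mul_diag_mx !mxE Rstar_factor. Qed.

Definition U4p_inv p : 'M[R]_(p.-1) :=
  \matrix_(i, j) (evalZ (dickson i.+1) (theta p j.+1) * theta p j.+1 / (2 * p)%N%:R).

Lemma U4p_invK p : (3 <= p)%N -> odd p -> U4p_inv p *m U4p p rstar = 1%:M.
Proof.
move=> p3 op; apply/matrixP => i i'; rewrite !mxE.
pose g (x : R) := evalZ (dickson i.+1) x * (evalZ (dickson i'.+1) x + 2 * rcoef i'.+1).
transitivity ((\sum_(j < p.-1) g (theta p j.+1)) / (2 * p)%N%:R).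
  by rewrite mulr_suml; apply: eq_bigr => j _; rewrite !mxE /g evalZ_Rstar_quot; ring.
rewrite sum_theta // /g nu_middle // evalZ_Rstar_quot mul0r mulr0 subr0.
rewrite dickson_orthogonality ?eqSS; try by apply/andP; have := ltn_ord i; have := ltn_ord i'; lia.
by rewrite mulrAC divff ?mul1r // pnatr_eq0; lia.
Qed.

Lemma invmx_U4p p : (3 <= p)%N -> odd p ->
  U4p (R:=R) p rstar \in unitmx /\ invmx (U4p p rstar) = U4p_inv p.
Proof.
move=> p3 op; have UinvK := U4p_invK p p3 op.
have [_ Uunit] := mulmx1_unit UinvK; split=> //.
by rewrite -[invmx _]mul1mx -UinvK -mulmxA mulmxV // mulmx1.
Qed.

Lemma frob_le n (A : 'M[R]_n) (M : R) : 0 <= M ->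
  (forall i j, `|A i j| <= M) -> frob A <= n%:R * M.
Proof.
move=> M0 hA; have nM : 0 <= n%:R * M by rewrite mulr_ge0.
rewrite /frob -(ger0_norm nM) -(sqrtr_sqr (n%:R * M)) ler_sqrt ?sqr_ge0 //.
apply: (@le_trans _ _ (\sum_(i < n) \sum_(k < n) M * M)).
  apply: ler_sum => i _; rewrite !mxE; apply: ler_sum => k _; rewrite mxE.
  by rewrite (le_trans (ler_norm _)) // normrM ler_pM.
rewrite !sumr_const !card_ord (_ : M * M *+ n *+ n = (n%:R * M) ^+ 2) //; ring.
Qed.

Lemma frob_U4p_le p : frob (U4p (R:=R) p rstar) <= p.-1%:R * p%:R.
Proof.
apply: frob_le => // j i; rewrite mxE.
have [y ->] := theta_cos R p j.+1.
by rewrite (le_trans (norm_Rstar_quot_cos_le _ _ _)) // ler_nat; have := ltn_ord i; lia.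
Qed.

Lemma frob_U4p_inv_le p : (0 < p)%N -> frob (U4p_inv p) <= p.-1%:R * 4.
Proof.
move=> p0; apply: frob_le => // i j; rewrite mxE.
have [y ->] := theta_cos R p j.+1.
rewrite normrM normfV normrM normr_nat.
have inv_le1 : ((2 * p)%N%:R)^-1 <= 1 :> R by rewrite invf_le1 ?ltr0n ?ler1n; lia.
have norm_prod_le4 : `|evalZ (dickson i.+1) (2 * cos y)| * `|2 * cos y| <= 4.
  have := ler_pM (normr_ge0 _) (normr_ge0 _) (norm_dickson_cos_le R i.+1 y) (norm_cos2_le2 R y).
  lra.
by rewrite -[leRHS]mulr1 ler_pM ?mulr_ge0 ?invr_ge0 ?ler0n.
Qed.

End TheMatrixU.

Theorem mainTheorem7 (R : realType) (p : nat) :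
  prime p -> odd p ->
  exists r : nat -> {poly int},
    (forall i : nat, (i <= p - 2)%N -> r i \is monic /\ size (r i) = i.+1) /\
    N4p p = Pdiag p *m U4p (R:=R) p r /\
    U4p (R:=R) p r \in unitmx /\
    Cond (U4p (R:=R) p r) <= (p ^ 3 * (p + 1) * (2 * p - 1) ^ 2)%N%:R.
Proof.
move=> pr op; have p3 : (2 < p)%N := odd_prime_gt2 op pr.
have [Uunit Uinv] := invmx_U4p R p p3 op.
exists rstar; split; first by move=> i _; apply: rstar_monic_size.
split; first exact: N4p_factor.
split=> //; rewrite /Cond Uinv.
have p0 : (0 < p)%N by lia.
apply: le_trans (ler_pM (sqrtr_ge0 _) (sqrtr_ge0 _) (frob_U4p_le R p) (frob_U4p_inv_le R p p0)) _.
by rewrite -!natrM ler_nat; nia.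
Qed.
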